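(* Let $n\in\mathbb{N}_{+}$, $a\in\mathbb{R}_{\ge 0}$ and $b\in[0,\tfrac12]$, and consider the ODE system \[ \dot{x}_i = x_i(1 - x_i)(x_i - b) - (n - 1)a x_i + \sum_{j=1,\, j\neq i}^{n} a x_j,\qquad i=1,\dots,n. \] For any steady state $x=(x_1,\dots,x_n)\in\mathbb{R}_{\ge 0}^n$ of this system (i.e. a nonnegative point at which all right-hand sides vanish), the coordinates $x_1,\dots,x_n$ take at most three distinct values.
   Context: A steady state of the system for given parameters $(a,b)$ is a point $x\in\mathbb{R}_{\ge 0}^n$ at which the right-hand side of every equation vanishes; only nonnegative steady states are considered. *)

From mathcomp Require Import all_boot all_order all_algebra.
From mathcomp Require Import reals.
Set Implicit Arguments. Unset Strict Implicit. Unset Printing Implicit Defensive.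
Import Order.TTheory GRing.Theory Num.Theory.
Local Open Scope ring_scope.

Definition rhs (R : realType) (n : nat) (a b : R) (x : 'I_n -> R) (i : 'I_n) : R :=
  x i * (1 - x i) * (x i - b) - (n%:R - 1) * a * x i
  + \sum_(j < n | j != i) a * x j.

Definition steady_state (R : realType) (n : nat) (a b : R) (x : 'I_n -> R) : Prop :=
  (forall i, 0 <= x i) /\ (forall i, rhs a b x i = 0).

(* Summing the i-th equation's coupling term over j <> i gives a (S - x_i), where
   S is the sum of all coordinates.  Hence every coordinate of a steady state is a
   root of one and the same monic cubic, whose coefficients depend only on a, b, n
   and S, and such a cubic has at most three distinct roots. *)
From mathcomp Require Import all_boot all_order all_algebra.
From mathcomp Require Import reals.
From mathcomp Require Import ring.
Set Implicit Arguments. Unset Strict Implicit. Unset Printing Implicit Defensive.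
Import Order.TTheory GRing.Theory Num.Theory.
Local Open Scope ring_scope.

Lemma size_undup_roots_lt (R : idomainType) (p : {poly R}) (s : seq R) :
  p != 0 -> all (root p) s -> (size (undup s) < size p)%N.
Proof.
move=> p_neq0 s_roots; apply: max_poly_roots p_neq0 _ (undup_uniq s).
by apply/allP => z; rewrite mem_undup => /(allP s_roots).
Qed.

Definition steady_cubic (R : nzRingType) (n : nat) (a b S : R) : {poly R} :=
  Poly [:: - (a * S); b + n%:R * a; - (1 + b); 1].

Lemma size_steady_cubic (R : nzRingType) (n : nat) (a b S : R) :
  size (steady_cubic n a b S) = 4%N.
Proof. by rewrite /steady_cubic (PolyK (c := 0)) ?oner_neq0. Qed.

Lemma steady_cubic_neq0 (R : nzRingType) (n : nat) (a b S : R) :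
  steady_cubic n a b S != 0.
Proof. by rewrite -size_poly_eq0 size_steady_cubic. Qed.

Lemma rhs_steady_cubic (R : realType) (n : nat) (a b : R) (x : 'I_n -> R) i :
  rhs a b x i = - (steady_cubic n a b (\sum_j x j)).[x i].
Proof.
have coupling : \sum_(j < n | j != i) a * x j = a * \sum_j x j - a * x i.
  by rewrite mulr_sumr [in RHS](bigD1 i) //= addrAC subrr add0r.
by rewrite /rhs coupling horner_Poly /=; ring.
Qed.

Theorem theorem1 (R : realType) (n : nat) (a b : R)
  (hn : (0 < n)%N) (ha : 0 <= a) (hb0 : 0 <= b) (hb1 : b <= 1 / 2)
  (x : 'I_n -> R) (hx : steady_state a b x) :
  (size (undup [seq x i | i <- enum 'I_n]) <= 3)%N.
Proof.
have [_ rhs0] := hx.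
rewrite -ltnS -(size_steady_cubic n a b (\sum_j x j)).
apply: size_undup_roots_lt; first exact: steady_cubic_neq0.
apply/allP => _ /mapP [i _ ->].
by rewrite /root -oppr_eq0 -rhs_steady_cubic rhs0.
Qed.
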